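(* Assume the abstract framework described in the context. Let $u\in\mathcal{H}_2^\Omega$ satisfy $(Lu)|_\Omega=0$, and let $U\in\mathcal{H}_2$ be any element with $U|_\Omega=u$. Then $$u=-\mathbf{D}^B_\Omega(\operatorname{Tr}_2U)+(\mathbf{S}^L_\Omega(\mathbf{M}^\Omega_Bu))|_\Omega,\qquad 0=\mathbf{D}^B_{\mathcal{C}}(\operatorname{Tr}_2U)+(\mathbf{S}^L_{\mathcal{C}}(\mathbf{M}^\Omega_Bu))|_{\mathcal{C}}.$$
   Context: Abstract framework. Let $\mathcal{H}_1,\mathcal{H}_2$ be complex Hilbert spaces, and for $j=1,2$ let $\widehat{\mathcal{H}}_j^\Omega$, $\widehat{\mathcal{H}}_j^{\mathcal{C}}$, $\widehat{\mathcal{D}}_j$ be normed (or seminormed) vector spaces. We are given bounded linear operators $\operatorname{Tr}_j:\mathcal{H}_j\to\widehat{\mathcal{D}}_j$ and bounded linear ''restriction'' operators $F\mapsto F|_\Omega\in\widehat{\mathcal{H}}_j^\Omega$ and $F\mapsto F|_{\mathcal{C}}\in\widehat{\mathcal{H}}_j^{\mathcal{C}}$ on $\mathcal{H}_j$. Define $\mathcal{H}_j^\Omega=\{F|_\Omega:F\in\mathcal{H}_j\}$ with norm $\|f\|=\inf\{\|F\|_{\mathcal{H}_j}:F|_\Omega=f\}$, similarly $\mathcal{H}_j^{\mathcal{C}}$, and $\mathcal{D}_j=\{\operatorname{Tr}_jF:F\in\mathcal{H}_j\}$ with the analogous quotient norm (modulo elements of norm zero). Let $\mathcal{N}_2=\mathcal{D}_1^*$,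 $\mathcal{N}_1=\mathcal{D}_2^*$ with duality pairings $\langle\cdot,\cdot\rangle$. We are given bounded bilinear forms $B:\mathcal{H}_1\times\mathcal{H}_2\to\mathbb{C}$, $B^\Omega:\mathcal{H}_1^\Omega\times\mathcal{H}_2^\Omega\to\mathbb{C}$, $B^{\mathcal{C}}:\mathcal{H}_1^{\mathcal{C}}\times\mathcal{H}_2^{\mathcal{C}}\to\mathbb{C}$, and $\lambda>0$ such that for all $u\in\mathcal{H}_1$, $v\in\mathcal{H}_2$, $\varphi,\psi\in\mathcal{H}_j$: (i) $\sup_{w\ne0}|B(w,v)|/\|w\|_{\mathcal{H}_1}\ge\lambda\|v\|_{\mathcal{H}_2}$ and $\sup_{w\ne0}|B(u,w)|/\|w\|_{\mathcal{H}_2}\ge\lambda\|u\|_{\mathcal{H}_1}$; (ii) $B(u,v)=B^\Omega(u|_\Omega,v|_\Omega)+B^{\mathcal{C}}(u|_{\mathcal{C}},v|_{\mathcal{C}})$; (iii) if $\operatorname{Tr}_j\varphi=\operatorname{Tr}_j\psi$ then there is $w\in\mathcal{H}_j$ with $w|_\Omega=\varphi|_\Omega$, $w|_{\mathcal{C}}=\psi|_{\mathcal{C}}$, $\operatorname{Tr}_jw=\operatorname{Tr}_j\varphi$. Definitions: for $u\in\mathcal{H}_2^\Omega$, $(Lu)|_\Omega=0$ means $B^\Omega(\varphi|_\Omega,u)=0$ for all $\varphi\in\mathcal{H}_1$ with $\operatorname{Tr}_1\varphi=0$. For such $u$ the Neumann boundary value $\mathbf{M}^\Omega_Bu\in\mathcal{N}_2$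 is defined by $\langle\operatorname{Tr}_1\varphi,\mathbf{M}^\Omega_Bu\rangle=B^\Omega(\varphi|_\Omega,u)$ for all $\varphi\in\mathcal{H}_1$ (well defined). For $u\in\mathcal{H}_2^\Omega$, $L(u\mathbf{1}_\Omega)\in\mathcal{H}_1^*$ is $\langle\varphi,L(u\mathbf{1}_\Omega)\rangle=B^\Omega(\varphi|_\Omega,u)$, and analogously $L(u\mathbf{1}_{\mathcal{C}})$ for $u\in\mathcal H_2^{\mathcal C}$ with $B^{\mathcal{C}}$; for $F\in\mathcal H_2$, $L(\mathbf 1_\Omega F)=L(F|_\Omega\mathbf 1_\Omega)$. Newton potential: for $H\in\mathcal{H}_1^*$, $\Pi^LH\in\mathcal{H}_2$ is the unique element with $B(\varphi,\Pi^LH)=\langle\varphi,H\rangle$ for all $\varphi\in\mathcal{H}_1$. Single layer potential: for $g\in\mathcal{N}_2$, $\mathbf{S}^L_\Omega g=\mathbf{S}^L_{\mathcal{C}}g$ is the unique element of $\mathcal{H}_2$ with $B(\varphi,\mathbf{S}^L_\Omega g)=\langle\operatorname{Tr}_1\varphi,g\rangle$ for all $\varphi\in\mathcal{H}_1$. Double layer potentials: for $f\in\mathcal{D}_2$ and any $F\in\mathcal{H}_2$ with $\operatorname{Tr}_2F=f$, $\mathbf{D}^B_\Omega f=-F|_\Omega+(\Pi^L(L(\mathbf{1}_\Omega F)))|_\Omega\in\mathcal{H}_2^\Omega$ and $\mathbf{D}^B_{\mathcal{C}}f=-F|_{\mathcal{C}}+(\Pi^L(L(\mathbf{1}_{\mathcal{C}}F)))|_{\mathcal{C}}\in\mathcal{H}_2^{\mathcal{C}}$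 (independent of the choice of $F$). *)

From HB Require Import structures.
From mathcomp Require Import all_boot all_order all_algebra.
From mathcomp Require Import all_classical all_reals all_analysis.
From mathcomp Require Export complex.
Import Order.TTheory GRing.Theory Num.Theory.
Import numFieldNormedType.Exports.
Local Open Scope ring_scope.

Set Implicit Arguments.
Unset Strict Implicit.
Unset Printing Implicit Defensive.

Section Framework.
Variable R : realType.
Local Notation C := R[i].

Definition is_hilbert (H : completeNormedModType C) : Prop :=
  exists ip : H -> H -> C,
    (forall (a : C) (x y z : H), ip (a *: x + y) z = a * ip x z + ip y z) /\
    (forall x y : H, ip x y = (ip y x)^*) /\
    (forall x : H, `|x| ^+ 2 = ip x x).

Definition is_seminorm (V : lmodType C) (nu : V -> C) : Prop :=
  (forall x, 0 <= nu x) /\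
  (forall x y, nu (x + y) <= nu x + nu y) /\
  (forall (a : C) x, nu (a *: x) = `|a| * nu x).

Definition bounded_map (H : normedModType C) (V : lmodType C)
  (nu : V -> C) (T : H -> V) : Prop :=
  exists c : C, forall F, nu (T F) <= c * `|F|.

Definition bounded_bilinear (H1 H2 : normedModType C) (B : H1 -> H2 -> C) :=
  (forall (a : C) x y v, B (a *: x + y) v = a * B x v + B y v) /\
  (forall (a : C) u x y, B u (a *: x + y) = a * B u x + B u y) /\
  (exists c : C, forall u v, `|B u v| <= c * `|u| * `|v|).

(* A bounded bilinear form  b : r1(H1) x r2(H2) -> C  on the ranges
   r1(H1), r2(H2) equipped with the quotient norms
   ||f|| = inf { ||F|| : r F = f }.  Since the value b (r1 F) (r2 G) only
   depends on r1 F, r2 G, the bound "<= c ||r1 F|| ||r2 G||" (quotient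
   norms) is exactly the bound below quantified over all representatives. *)
Definition bounded_bilinear_on (H1 H2 : normedModType C) (V1 V2 : lmodType C)
  (r1 : H1 -> V1) (r2 : H2 -> V2) (b : V1 -> V2 -> C) :=
  (forall (a : C) F F' G,
      b (a *: r1 F + r1 F') (r2 G) = a * b (r1 F) (r2 G) + b (r1 F') (r2 G)) /\
  (forall (a : C) F G G',
      b (r1 F) (a *: r2 G + r2 G') = a * b (r1 F) (r2 G) + b (r1 F) (r2 G')) /\
  (exists c : C, forall F G, `|b (r1 F) (r2 G)| <= c * `|F| * `|G|).

(* f (in the range of T) has quotient norm  inf {||F|| : T F = f}  equal to 0,
   i.e. f is zero in the quotient space  D = T(H) / {norm zero}. *)
Definition qzero (H : normedModType C) (V : lmodType C) (T : H -> V) (f : V) :=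
  forall e : C, 0 < e -> exists F : H, T F = f /\ `|F| < e.

(* equality in D = T(H) modulo elements of norm zero *)
Definition eqD (H : normedModType C) (V : lmodType C) (T : H -> V) (f g : V) :=
  qzero T (f - g).

(* inf-sup conditions (i):  sup_{w<>0} |B(w,v)|/||w|| >= lam ||v||  etc. *)
Definition infsup_left (H1 H2 : normedModType C) (B : H1 -> H2 -> C) (lam : C) :=
  forall (v : H2) (e : C), 0 < e -> e < lam * `|v| ->
    exists w : H1, w != 0 /\ (lam * `|v| - e) * `|w| <= `|B w v|.
Definition infsup_right (H1 H2 : normedModType C) (B : H1 -> H2 -> C) (lam : C) :=
  forall (u : H1) (e : C), 0 < e -> e < lam * `|u| ->
    exists w : H2, w != 0 /\ (lam * `|u| - e) * `|w| <= `|B u w|.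

Record framework (H1 H2 : completeNormedModType C)
  (V1O V2O V1C V2C D1 D2 : lmodType C) := Framework {
  hilbert1 : is_hilbert H1;
  hilbert2 : is_hilbert H2;
  (* (semi)norms of the spaces \hat H_j^Omega, \hat H_j^C, \hat D_j *)
  nu1O : V1O -> C; nu2O : V2O -> C; nu1C : V1C -> C; nu2C : V2C -> C;
  nuD1 : D1 -> C; nuD2 : D2 -> C;
  nu1O_sn : is_seminorm nu1O; nu2O_sn : is_seminorm nu2O;
  nu1C_sn : is_seminorm nu1C; nu2C_sn : is_seminorm nu2C;
  nuD1_sn : is_seminorm nuD1; nuD2_sn : is_seminorm nuD2;
  Tr1 : {linear H1 -> D1}; Tr2 : {linear H2 -> D2};
  resO1 : {linear H1 -> V1O}; resO2 : {linear H2 -> V2O};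
  resC1 : {linear H1 -> V1C}; resC2 : {linear H2 -> V2C};
  Tr1_bd : bounded_map nuD1 Tr1; Tr2_bd : bounded_map nuD2 Tr2;
  resO1_bd : bounded_map nu1O resO1; resO2_bd : bounded_map nu2O resO2;
  resC1_bd : bounded_map nu1C resC1; resC2_bd : bounded_map nu2C resC2;
  B : H1 -> H2 -> C;
  BO : V1O -> V2O -> C;
  BC : V1C -> V2C -> C;
  B_bd : bounded_bilinear B;
  BO_bd : bounded_bilinear_on resO1 resO2 BO;
  BC_bd : bounded_bilinear_on resC1 resC2 BC;
  lam : C;
  lam_gt0 : 0 < lam;
  infsup1 : infsup_left B lam;
  infsup2 : infsup_right B lam;
  B_split : forall u v, B u v = BO (resO1 u) (resO2 v) + BC (resC1 u) (resC2 v);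
  (* (iii), the equality Tr phi = Tr psi being equality in D_j *)
  glue1 : forall phi psi : H1, eqD Tr1 (Tr1 phi) (Tr1 psi) ->
    exists w : H1, resO1 w = resO1 phi /\ resC1 w = resC1 psi /\
                   eqD Tr1 (Tr1 w) (Tr1 phi);
  glue2 : forall phi psi : H2, eqD Tr2 (Tr2 phi) (Tr2 psi) ->
    exists w : H2, resO2 w = resO2 phi /\ resC2 w = resC2 psi /\
                   eqD Tr2 (Tr2 w) (Tr2 phi)
}.

Section Defs.
Variables (H1 H2 : completeNormedModType C) (V1O V2O V1C V2C D1 D2 : lmodType C).
Variable fw : framework H1 H2 V1O V2O V1C V2C D1 D2.

Local Notation Tr1 := (Tr1 fw). Local Notation Tr2 := (Tr2 fw).
Local Notation resO1 := (resO1 fw). Local Notation resO2 := (resO2 fw).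
Local Notation resC1 := (resC1 fw). Local Notation resC2 := (resC2 fw).
Local Notation B := (B fw). Local Notation BO := (BO fw). Local Notation BC := (BC fw).

Definition in_H2O (u : V2O) : Prop := exists F : H2, resO2 F = u.

(* (L u)|_Omega = 0 : B^Omega(phi|_Omega, u) = 0 whenever Tr_1 phi = 0 in D_1 *)
Definition L_vanishes_O (u : V2O) : Prop :=
  forall phi : H1, qzero Tr1 (Tr1 phi) -> BO (resO1 phi) u = 0.

(* g : \hat D_1 -> C represents an element of N_2 = D_1^* : it is linear and
   bounded on D_1 = Tr_1(H_1) w.r.t. the quotient norm
   ||f|| = inf {||F|| : Tr_1 F = f}; pairing <Tr_1 phi, g> = g (Tr_1 phi). *)
Definition in_N2 (g : D1 -> C) : Prop :=
  (forall (a : C) (F G : H1), g (a *: Tr1 F + Tr1 G) = a * g (Tr1 F) + g (Tr1 G)) /\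
  (exists c : C, forall F : H1, `|g (Tr1 F)| <= c * `|F|).

Definition is_neumann_O (u : V2O) (g : D1 -> C) : Prop :=
  in_N2 g /\ forall phi : H1, g (Tr1 phi) = BO (resO1 phi) u.

Definition L_indO (u : V2O) : H1 -> C := fun phi => BO (resO1 phi) u.
Definition L_indC (u : V2C) : H1 -> C := fun phi => BC (resC1 phi) u.
Definition L_1O (F : H2) : H1 -> C := L_indO (resO2 F).
Definition L_1C (F : H2) : H1 -> C := L_indC (resC2 F).

Definition is_newton (Hf : H1 -> C) (v : H2) : Prop :=
  forall phi : H1, B phi v = Hf phi.

Definition is_single_layer (g : D1 -> C) (w : H2) : Prop :=
  forall phi : H1, B phi w = g (Tr1 phi).

Definition is_double_layer_O (f : D2) (d : V2O) : Prop :=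
  forall (F P : H2), eqD Tr2 (Tr2 F) f -> is_newton (L_1O F) P ->
    d = - resO2 F + resO2 P.

Definition is_double_layer_C (f : D2) (d : V2C) : Prop :=
  forall (F P : H2), eqD Tr2 (Tr2 F) f -> is_newton (L_1C F) P ->
    d = - resC2 F + resC2 P.

End Defs.
End Framework.

From HB Require Import structures.
From mathcomp Require Import all_boot all_order all_algebra.
From mathcomp Require Import all_classical all_reals all_analysis.
From mathcomp Require Import complex.
Import Order.TTheory GRing.Theory Num.Theory.
Import numFieldNormedType.Exports.
Local Open Scope ring_scope.

Set Implicit Arguments.
Unset Strict Implicit.
Unset Printing Implicit Defensive.

(* Since B(phi, S g) = <Tr_1 phi, g> = B^Omega(phi|_Omega, u) for g = M_B^Omega u,
   the single layer potential w = S g is the Newton potential of L(U 1_Omega);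
   by the splitting (ii), U - w is then the Newton potential of L(U 1_C).
   Computing both double layer potentials with the representative F = U gives
   -U|_Omega + w|_Omega and -U|_C + (U - w)|_C, whence the two identities.
   The hypothesis (Lu)|_Omega = 0 only makes M_B^Omega u well defined; here
   M_B^Omega u is given as g. *)

Section Potentials.
Variable R : realType.
Variables (H1 H2 : completeNormedModType R[i]) (V1O V2O V1C V2C D1 D2 : lmodType R[i]).
Variable fw : framework H1 H2 V1O V2O V1C V2C D1 D2.

Lemma eqD_refl (H : normedModType R[i]) (V : lmodType R[i]) (T : {linear H -> V})
    (f : V) : eqD T f f.
Proof. by move=> e e_gt0; exists 0; rewrite linear0 subrr normr0. Qed.

Lemma B_subr (phi : H1) (v v' : H2) : B fw phi (v - v') = B fw phi v - B fw phi v'.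
Proof.
move: ((B_bd fw).2.1 (-1) phi v' v).
by rewrite scaleN1r mulN1r addrC => ->; rewrite addrC.
Qed.

Lemma single_layer_neumann_newton (u : V2O) (g : D1 -> R[i]) (w : H2) :
  is_neumann_O fw u g -> is_single_layer fw g w -> is_newton fw (L_indO fw u) w.
Proof. by move=> [_ hg] hw phi; rewrite hw hg. Qed.

Lemma newton_L_1C (F P : H2) :
  is_newton fw (L_1O fw F) P -> is_newton fw (L_1C fw F) (F - P).
Proof.
move=> hP phi; rewrite B_subr hP (B_split fw phi F).
by rewrite /L_1O /L_indO addrC addKr.
Qed.

Lemma double_layer_O_Tr (F P : H2) (d : V2O) :
  is_double_layer_O fw (Tr2 fw F) d -> is_newton fw (L_1O fw F) P ->
  d = - resO2 fw F + resO2 fw P.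
Proof. by move=> hd; apply: hd; apply: eqD_refl. Qed.

Lemma double_layer_C_Tr (F P : H2) (d : V2C) :
  is_double_layer_C fw (Tr2 fw F) d -> is_newton fw (L_1C fw F) P ->
  d = - resC2 fw F + resC2 fw P.
Proof. by move=> hd; apply: hd; apply: eqD_refl. Qed.

End Potentials.

Theorem lemma5p2 (R : realType) (H1 H2 : completeNormedModType R[i])
  (V1O V2O V1C V2C D1 D2 : lmodType R[i])
  (fw : framework H1 H2 V1O V2O V1C V2C D1 D2)
  (u : V2O) (U : H2) (g : D1 -> R[i]) (w : H2) (dO : V2O) (dC : V2C) :
  in_H2O fw u -> L_vanishes_O fw u -> resO2 fw U = u ->
  is_neumann_O fw u g ->
  is_single_layer fw g w ->
  is_double_layer_O fw (Tr2 fw U) dO ->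
  is_double_layer_C fw (Tr2 fw U) dC ->
  u = - dO + resO2 fw w /\ 0 = dC + resC2 fw w.
Proof.
move=> _ _ hU hg hw hO hC.
have nO : is_newton fw (L_1O fw U) w.
  by rewrite /L_1O hU; apply: single_layer_neumann_newton hg hw.
split.
  by rewrite (double_layer_O_Tr hO nO) opprD opprK subrK.
by rewrite (double_layer_C_Tr hC (newton_L_1C nO)) linearB /= addKr addNr.
Qed.
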